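(* Let $S=\{\rho_1=0<\rho_2<\cdots\}$ be a numerical semigroup and $\rho\in S$. Then $\#A[\rho]$ is odd if and only if $\rho\in 2S$. In this case, if $\rho=2\rho_i$, then $\#A[\rho]\le 2i-1$.
   Context: A numerical semigroup is a submonoid $S$ of $(\mathbb{N}_0,+)$ with finite complement, with elements listed increasingly. For $\rho\in S$, $A[\rho]=\{p\in S:\ \rho-p\in S\}$. $2S=\{2s:\ s\in S\}$. *)

From mathcomp Require Import all_boot.
Set Implicit Arguments. Unset Strict Implicit. Unset Printing Implicit Defensive.

Definition numerical_semigroup (S : pred nat) : Prop :=
  [/\ S 0,
      (forall a b, S a -> S b -> S (a + b)) &
      exists N, forall n, N <= n -> S n].

(* A[rho] = { p in S : rho - p in S }.  Since rho - p must lie in S ⊆ N_0,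
   necessarily p <= rho, so A[rho] is a subset of {0,...,rho} ('I_rho.+1). *)
Definition Aset (S : pred nat) (rho : nat) : {set 'I_rho.+1} :=
  [set p : 'I_rho.+1 | S p && S (rho - p)].

Definition in_double (S : pred nat) (rho : nat) : Prop :=
  exists2 s, S s & rho = 2 * s.

(* s = rho_i, the i-th element (1-indexed) of S listed increasingly:
   s ∈ S and exactly i-1 elements of S are smaller than s. *)
Definition is_ith_elem (S : pred nat) (i s : nat) : Prop :=
  [/\ 1 <= i, S s & count S (iota 0 s) = i.-1].

(* The reflection p |-> rho - p is an involution of A[rho] whose only possible
   fixed point is rho/2, which lies in A[rho] exactly when rho/2 lies in S.
   Hence A[rho] splits into pairs {p, rho - p} with p < rho/2 plus possibly
   rho/2 itself, so #A[rho] is odd iff rho is in 2S.  If rho = 2 rho_i, the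
   lower members of the pairs are elements of S below rho_i, of which there
   are i - 1, whence #A[rho] <= 2 (i - 1) + 1. *)
From mathcomp Require Import all_boot.
From mathcomp Require Import zify.

Lemma card_ord_count n (P : pred nat) :
  #|[set p : 'I_n | P p]| = count P (iota 0 n).
Proof.
rewrite -sum1_card (eq_bigl (fun i : 'I_n => P i)) => [|i]; last by rewrite inE.
by rewrite -(big_mkord P (fun=> 1)) sum1_count /index_iota subn0.
Qed.

Lemma count_iota_ltn (P : pred nat) n s : s <= n ->
  count (fun x => P x && (x < s)) (iota 0 n) = count P (iota 0 s).
Proof. by move=> le_sn; rewrite -count_filter (filter_iota_ltn 0). Qed.

Lemma val_rev_ord n (p : 'I_n.+1) : val (rev_ord p) = n - p.
Proof. by rewrite /= subSS. Qed.

Lemma card_rev_ord_stable n (A : {set 'I_n.+1}) :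
  (forall p, (rev_ord p \in A) = (p \in A)) ->
  #|A| = 2 * #|[set p in A | 2 * p < n]| + #|[set p in A | 2 * p == n]|.
Proof.
move=> revA.
set low := [set p : 'I_n.+1 | 2 * p < n]; set mid := [set p : 'I_n.+1 | 2 * p == n].
rewrite !setIdE -/low -/mid.
have upper : (A :\: low) :\: mid = @rev_ord n.+1 @: (A :&: low).
  apply/setP => p; rewrite /low /mid; apply/idP/imsetP => [|[q]].
  - rewrite !inE => /andP [ne_pn /andP [ge_pn pA]].
    exists (rev_ord p); last by rewrite rev_ordK.
    by rewrite !inE revA pA val_rev_ord /=; have := ltn_ord p; lia.
  - rewrite !inE => /andP [qA lt_qn] ->.
    by rewrite revA qA val_rev_ord /=; have := ltn_ord q; lia.
have mid_high : (A :\: low) :&: mid = A :&: mid.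
  by apply/setP => p; rewrite !inE; case: eqP => [->|]; rewrite ?ltnn ?andbF ?andbT.
rewrite -[LHS](cardsID low) -(cardsID mid (A :\: low)) upper mid_high.
rewrite card_imset; last exact: rev_ord_inj.
by rewrite addnCA addnn -mul2n addnC.
Qed.

Section Aset.

Variables (S : pred nat) (rho : nat).

Lemma rev_ord_Aset (p : 'I_rho.+1) : (rev_ord p \in Aset S rho) = (p \in Aset S rho).
Proof.
rewrite !inE val_rev_ord subKn; first exact: andbC.
by rewrite -ltnS ltn_ord.
Qed.

Lemma card_Aset :
  #|Aset S rho| = 2 * #|[set p in Aset S rho | 2 * p < rho]|
                  + #|[set p in Aset S rho | 2 * p == rho]|.
Proof. exact/card_rev_ord_stable/rev_ord_Aset. Qed.

Lemma card_Aset_mid :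
  #|[set p in Aset S rho | 2 * p == rho]| = nat_of_bool (~~ odd rho && S rho./2).
Proof.
case: (boolP (~~ odd rho && S rho./2)) => [/andP [even_rho Shalf] | no_mid].
  have half_lt : rho./2 < rho.+1 by lia.
  rewrite (_ : [set p in _ | _] = [set Ordinal half_lt]) ?cards1 //; apply/setP => p.
  rewrite !inE -val_eqE /=; apply/andP/eqP => [[_ /eqP] | ->]; first by lia.
  have -> : rho - rho./2 = rho./2 by lia.
  by rewrite Shalf; split=> //; apply/eqP; lia.
apply: eq_card0 => p; rewrite !inE.
apply/negP => /andP [/andP [Sp _] /eqP twice_p]; move: no_mid.
have -> : rho./2 = p by lia.
by rewrite Sp andbT; lia.
Qed.

Lemma in_doubleP : reflect (in_double S rho) (~~ odd rho && S rho./2).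
Proof.
apply: (iffP andP) => [[even_rho Shalf] | [s Ss ->]].
  by exists rho./2 => //; lia.
by rewrite mul2n odd_double doubleK.
Qed.

Lemma card_Aset_low s : rho = 2 * s ->
  #|[set p in Aset S rho | 2 * p < rho]| <= count S (iota 0 s).
Proof.
move=> rho_2s.
rewrite -(@count_iota_ltn S rho.+1); last by lia.
rewrite -card_ord_count; apply/subset_leq_card/subsetP => p.
by rewrite !inE => /andP [/andP [Sp _] low]; rewrite Sp /=; lia.
Qed.

End Aset.

Theorem mainTheorem11 (S : pred nat) (rho : nat) :
  numerical_semigroup S -> S rho ->
  (odd #|Aset S rho| <-> in_double S rho) /\
  (forall i s, is_ith_elem S i s -> rho = 2 * s -> #|Aset S rho| <= 2 * i - 1).
Proof.
move=> _ _; rewrite card_Aset card_Aset_mid; split.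
  by rewrite oddD oddM oddb; split=> /in_doubleP.
move=> i s [i_gt0 Ss count_below] rho_2s.
have mid : ~~ odd rho && S rho./2 by apply/in_doubleP; exists s.
have := card_Aset_low S rho s rho_2s; rewrite count_below mid; lia.
Qed.
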